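(* Let $R$ be an associative ring with identity, and let $a,b,c,d\in R$ satisfy $bdb=bac$ and $dbd=acd$. If $ac\in R^{d}$, then $bd\in R^{d}$ and $(bd)^{d}=b\big((ac)^{d}\big)^2d$.
   Context: For $x\in R$, $\mathrm{comm}(x)=\{y\in R : xy=yx\}$ and $\mathrm{comm}^2(x)=\{y\in R : yz=zy \text{ for all } z\in\mathrm{comm}(x)\}$. $R^{inv}$ denotes the units of $R$, and $R^{qnil}=\{x\in R : 1+xy\in R^{inv}\text{ for every } y\in \mathrm{comm}(x)\}$. An element $x\in R$ has a generalized Drazin (g-Drazin) inverse if there is $y\in R$ with $y=yxy$, $y\in\mathrm{comm}^2(x)$ and $x-x^2y\in R^{qnil}$; such $y$ is unique and denoted $x^{d}$. $R^{d}$ is the set of elements having a g-Drazin inverse. *)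

From HB Require Import structures.
From mathcomp Require Import all_boot all_order all_algebra.
Set Implicit Arguments. Unset Strict Implicit. Unset Printing Implicit Defensive.
Import GRing.Theory.
Local Open Scope ring_scope.

(* Associative ring with identity: mathcomp pzRingType (zero ring allowed). *)

Definition commut (R : pzRingType) (x : R) : R -> Prop := fun y => x * y = y * x.

Definition commut2 (R : pzRingType) (x : R) : R -> Prop :=
  fun y => forall z, commut x z -> y * z = z * y.

Definition is_unit (R : pzRingType) (x : R) : Prop :=
  exists y : R, x * y = 1 /\ y * x = 1.

Definition quasinil (R : pzRingType) (x : R) : Prop :=
  forall y, commut x y -> is_unit (1 + x * y).

Definition is_gDrazin_inv (R : pzRingType) (x y : R) : Prop :=
  y = y * x * y /\ commut2 x y /\ quasinil (x - x * x * y).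

Definition has_gDrazin (R : pzRingType) (x : R) : Prop :=
  exists y, is_gDrazin_inv x y.

From HB Require Import structures.
From mathcomp Require Import all_boot all_order all_algebra.
Import GRing.Theory.
Local Open Scope ring_scope.

(* Put x := ac, so that bdb = bx and dbd = xd.  Then db commutes with x, hence
   with e := (ac)^d, and the identities y = y (bd) y and y in comm^2(bd) for
   y := b e^2 d reduce to those of e.  With the idempotent p := 1 - xe one gets
   bd - (bd)^2 y = bpd, and s := bpd is intertwined with q := xp = x - x^2 e by
   s b = b q and q (pd) = (pd) s; since (sw)^2 = b q (pd) w^2 for w in comm(s),
   Jacobson's lemma turns quasinilpotence of q into that of s. *)

Lemma is_unit_1add_mulC (R : pzRingType) (u v : R) :
  is_unit (1 + v * u) -> is_unit (1 + u * v).
Proof.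
move=> [w [vuw wvu]]; exists (1 - u * w * v).
have uwv_r : u * w * v + u * v * (u * w * v) = u * v.
  have := congr1 (fun t => u * t * v) vuw.
  by rewrite /= mulr1 mulrDl mul1r mulrDr mulrDl !mulrA.
have uwv_l : u * w * v + u * w * v * (u * v) = u * v.
  have := congr1 (fun t => u * t * v) wvu.
  by rewrite /= mulr1 mulrDr mulr1 mulrDr mulrDl !mulrA.
split.
- by rewrite mulrBr mulr1 mulrDl mul1r opprD addrA -addrA -opprD uwv_r addrK.
- by rewrite mulrBl mul1r mulrDr mulr1 uwv_l addrK.
Qed.

Lemma is_unit_of_inv_lr (R : pzRingType) (u l r : R) :
  u * r = 1 -> l * u = 1 -> is_unit u.
Proof.
move=> ur lu; exists r; split=> //.
have -> : r = l by rewrite -[l]mulr1 -ur mulrA lu mul1r.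
exact: lu.
Qed.

Lemma is_unit_1add_of_1sub_sqr (R : pzRingType) (t : R) :
  is_unit (1 - t * t) -> is_unit (1 + t).
Proof.
move=> [v [tv vt]]; apply: (@is_unit_of_inv_lr _ _ (v * (1 - t)) ((1 - t) * v)).
- by rewrite mulrA mulrDl mul1r mulrBr mulr1 addrA subrK.
- have sqrE : (1 - t) * (1 + t) = 1 - t * t.
    by rewrite mulrBl mul1r mulrDr mulr1 opprD addrA addrK.
  by rewrite -mulrA sqrE.
Qed.

Lemma quasinil_intertwined (R : pzRingType) (q s b t : R) :
  s = b * t -> s * b = b * q -> q * t = t * s -> quasinil q -> quasinil s.
Proof.
move=> sE sb qt qnil_q w; rewrite /commut => sw.
apply: is_unit_1add_of_1sub_sqr.
have ssE : s * s = b * q * t by rewrite {2}sE mulrA sb.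
have sW : s * - (w * w) = - (w * w) * s.
  by rewrite mulrN mulNr mulrA sw -mulrA sw mulrA.
have -> : 1 - s * w * (s * w) = 1 + b * (q * (t * - (w * w))).
  by rewrite -mulrA (mulrA w) -sw !mulrA ssE !mulrN !mulrA.
apply: is_unit_1add_mulC; rewrite -mulrA; apply: qnil_q.
by rewrite /commut !mulrA qt -(mulrA t) sW mulrA -(mulrA _ s) sb !mulrA.
Qed.

Section GDrazinTransfer.

Variables (R : pzRingType) (x b d e : R).
Hypotheses (bdb : b * d * b = b * x) (dbd : d * b * d = x * d).
Hypotheses (exe : e = e * x * e) (e_comm2 : commut2 x e).
Hypothesis qnil_x : quasinil (x - x * x * e).

Lemma commut_x_db : x * (d * b) = d * b * x.
Proof.
by rewrite mulrA -dbd -!mulrA; congr (d * _); rewrite mulrA bdb.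
Qed.

Lemma commut_e_x : e * x = x * e.
Proof. exact: e_comm2. Qed.

Lemma commut_e_db : e * (d * b) = d * b * e.
Proof. exact: e_comm2 commut_x_db. Qed.

Let bdbE u : u * b * d * b = u * b * x.
Proof. by rewrite -!mulrA; congr (u * _); rewrite !mulrA. Qed.

Let dbdE u : u * d * b * d = u * x * d.
Proof. by rewrite -!mulrA; congr (u * _); rewrite !mulrA. Qed.

Let edbE u : u * e * d * b = u * d * b * e.
Proof. by rewrite -!mulrA commut_e_db !mulrA. Qed.

Let exeE u : u * e * x * e = u * e.
Proof. by rewrite -!mulrA; congr (u * _); rewrite mulrA -exe. Qed.

Let eexE u : u * e * e * x = u * e.
Proof. by rewrite -mulrA commut_e_x mulrA exeE. Qed.

Lemma gDrazin_bd_outer : b * (e * e) * d = b * (e * e) * d * (b * d) * (b * (e * e) * d).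
Proof. by rewrite !mulrA dbdE -!edbE dbdE exeE eexE. Qed.

Lemma gDrazin_bd_commut2 : commut2 (b * d) (b * (e * e) * d).
Proof.
move=> z; rewrite /commut => bdz.
have bdzE u : u * b * d * z = u * z * b * d.
  by rewrite -!mulrA; congr (u * _); move: bdz; rewrite -!mulrA.
have dzb_x : commut x (d * z * b) by rewrite /commut !mulrA -dbd bdzE bdbE.
have dzb_e : e * (d * z * b) = d * z * b * e by apply: e_comm2.
have edzbE u : u * e * d * z * b = u * d * z * b * e.
  by rewrite -!mulrA; congr (u * _); move: dzb_e; rewrite -!mulrA.
have xeeeE u : u * x * e * e * e = u * e * e.
  by rewrite -[u * x * e]mulrA -commut_e_x mulrA exeE.
by rewrite !mulrA -(eexE (b * e)) -(dbdE (b * e * e * e)) bdzE !edzbE bdz !mulrA bdbE xeeeE.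
Qed.

Let p := 1 - x * e.

Let pp : p * p = p.
Proof. by rewrite {1}/p mulrBl mul1r /p mulrBr mulr1 mulrA exeE subrr subr0. Qed.

Let commut_p_x : x * p = p * x.
Proof. by rewrite /p mulrBr mulrBl mulr1 mul1r -mulrA commut_e_x mulrA. Qed.

Let commut_p_db : p * (d * b) = d * b * p.
Proof.
by rewrite /p mulrBl mulrBr mul1r mulr1 -(mulrA x) commut_e_db mulrA commut_x_db -mulrA.
Qed.

Lemma gDrazin_bd_quasinil :
  quasinil (b * d - b * d * (b * d) * (b * (e * e) * d)).
Proof.
have -> : b * d - b * d * (b * d) * (b * (e * e) * d) = b * p * d.
  by rewrite !mulrA dbdE -!edbE dbdE eexE /p mulrBr mulr1 mulrBl !mulrA.
apply: (@quasinil_intertwined _ (x * p) _ b (p * d)).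
- by rewrite mulrA.
- by rewrite -!mulrA commut_p_db !mulrA bdb.
- rewrite !mulrA -(mulrA x p p) pp -(mulrA p d b) commut_p_db -(mulrA _ p p) pp.
  by rewrite -commut_p_db -(mulrA p) dbd mulrA -commut_p_x.
- by rewrite /p mulrBr mulr1 mulrA.
Qed.

End GDrazinTransfer.

Lemma is_gDrazin_inv_intertwined (R : pzRingType) (x b d e : R) :
  b * d * b = b * x -> d * b * d = x * d ->
  is_gDrazin_inv x e -> is_gDrazin_inv (b * d) (b * e ^+ 2 * d).
Proof.
move=> bdb dbd [exe [e_comm2 qnil_x]]; rewrite expr2.
split; first exact: gDrazin_bd_outer bdb dbd exe e_comm2.
split; first exact: gDrazin_bd_commut2 bdb dbd exe e_comm2.
exact: gDrazin_bd_quasinil bdb dbd exe e_comm2 qnil_x.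
Qed.

Theorem theorem2p2 (R : pzRingType) (a b c d : R) :
  b * d * b = b * a * c -> d * b * d = a * c * d ->
  has_gDrazin (a * c) ->
  has_gDrazin (b * d) /\
  forall e : R, is_gDrazin_inv (a * c) e -> is_gDrazin_inv (b * d) (b * e ^+ 2 * d).
Proof.
move=> bdb dbd [e e_gD]; rewrite -(mulrA b a c) in bdb.
have transfer e' := @is_gDrazin_inv_intertwined R (a * c) b d e' bdb dbd.
by split; [exists (b * e ^+ 2 * d); exact: transfer | exact: transfer].
Qed.
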